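(* Let $G$ be a looped simple graph. (a) No element of $M[IAS(G)]$ is a coloop. (b) Two distinct elements of $M[IAS(G)]$ are in series if and only if they are the two non-loop elements of the vertex triple $\tau_G(v)$ of an isolated vertex $v$ of $G$ (and in that case they are also parallel).
   Context: A looped simple graph is a finite graph in which each vertex carries at most one loop and no two distinct vertices are joined by more than one edge; ''neighbors'' are distinct vertices joined by a non-loop edge, and a vertex is isolated if it has no neighbors (it may be looped). $A(G)$ is the $V(G)\times V(G)$ matrix over $GF(2)$ with diagonal entry $1$ exactly at looped vertices and off-diagonal entry $1$ exactly for adjacent pairs. $IAS(G)=(I\mid A(G)\mid A(G)+I)$ over $GF(2)$, rows indexed by $V(G)$; the $v$-columns of the three blocks are labelled $\phi_G(v),\chi_G(v),\psi_G(v)$. $M[IAS(G)]$ is the binary column matroid of $IAS(G)$ on $W(G)=\{\phi_G(v),\chi_G(v),\psi_G(v):v\in V(G)\}$, and $\tau_G(v)=\{\phi_G(v),\chi_G(v),\psi_G(v)\}$. A loop is an element in no basis; a coloop is an element in every basis. Two non-loop elements are parallel if they form a $2$-element circuit. Two non-coloop elements are in series if no basis excludes both of them (coloops are all considered in series with one another). *)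

From HB Require Import structures.
From mathcomp Require Import all_boot all_order all_algebra.
Set Implicit Arguments. Unset Strict Implicit. Unset Printing Implicit Defensive.
Import GRing.Theory.
Local Open Scope ring_scope.

(* A looped simple graph on the finite vertex type V is given by a symmetric
   boolean relation adj : rel V; adj v v means v carries a loop, and for
   u != v, adj u v means u and v are neighbors. *)
Definition looped_simple_graph (V : finType) (adj : rel V) : Prop :=
  symmetric adj.

Definition elt (V : finType) := (V * 'I_3)%type.
Definition phiG (V : finType) (v : V) : elt V := (v, 0%R : 'I_3).
Definition chiG (V : finType) (v : V) : elt V := (v, 1%R : 'I_3).
Definition psiG (V : finType) (v : V) : elt V := (v, 2%R : 'I_3).
Definition tauG (V : finType) (v : V) : {set elt V} :=
  [set phiG v; chiG v; psiG v].

Definition adjmx (V : finType) (adj : rel V) (u v : V) : 'F_2 := (adj u v)%:R.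

Definition IAS_col (V : finType) (adj : rel V) (w : elt V) (u : V) : 'F_2 :=
  let v := w.1 in
  if val w.2 == 0%N then (u == v)%:R
  else if val w.2 == 1%N then adjmx adj u v
  else adjmx adj u v + (u == v)%:R.

Definition indep (V : finType) (adj : rel V) (S : {set elt V}) : Prop :=
  forall c : elt V -> 'F_2,
    (forall u : V, \sum_(w in S) c w * IAS_col adj w u = 0) ->
    forall w, w \in S -> c w = 0.

Definition is_basis (V : finType) (adj : rel V) (B : {set elt V}) : Prop :=
  indep adj B /\ forall T : {set elt V}, B \subset T -> indep adj T -> T = B.

Definition is_circuit (V : finType) (adj : rel V) (C : {set elt V}) : Prop :=
  ~ indep adj C /\ forall D : {set elt V}, D \proper C -> indep adj D.

Definition mloop (V : finType) (adj : rel V) (x : elt V) : Prop :=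
  forall B, is_basis adj B -> x \notin B.

Definition coloop (V : finType) (adj : rel V) (x : elt V) : Prop :=
  forall B, is_basis adj B -> x \in B.

Definition parallel (V : finType) (adj : rel V) (x y : elt V) : Prop :=
  ~ mloop adj x /\ ~ mloop adj y /\ is_circuit adj [set x; y] /\ #|[set x; y]| = 2%N.

Definition in_series (V : finType) (adj : rel V) (x y : elt V) : Prop :=
  (coloop adj x /\ coloop adj y) \/
  (~ coloop adj x /\ ~ coloop adj y /\
   forall B, is_basis adj B -> x \in B \/ y \in B).

Definition isolated (V : finType) (adj : rel V) (v : V) : Prop :=
  forall u : V, u != v -> ~~ adj v u.

(* Over GF(2) the column of phi(t) is the unit vector e_t and the columns of
   chi(t) and psi(t) add up to e_t, so any two elements of tau(t) span e_t.
   Hence deleting one element keeps the whole space spanned, and no element is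
   a coloop.  Two elements x, y lie in series exactly when the elements other
   than x and y do not span, i.e. some e_t escapes their span.  Then x and y
   are two elements of tau(t), and t is isolated: for a neighbour r of t, the
   column of chi(r) together with the e_u, u <> t, would produce e_t.  For an
   isolated t every column of tau(t) is a multiple of e_t and the three of them
   sum to zero; the third element of tau(t) must have a zero column, which
   forces the columns of x and y to both equal e_t, so x and y are parallel. *)

From mathcomp Require Import all_boot all_order all_algebra.
From Stdlib Require Import Classical.
Set Implicit Arguments. Unset Strict Implicit. Unset Printing Implicit Defensive.
Import GRing.Theory.
Local Open Scope ring_scope.

(* Column matroids of arbitrary matrices over a field; loops, coloops, bases
   and circuits of M[IAS(G)] are the instances [col := IAS_col adj], up to
   conversion. *)
Section ColumnMatroid.
Variables (F : fieldType) (E V : finType) (col : E -> V -> F).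
Implicit Types (S T B I : {set E}) (f g : V -> F) (x y w : E).

Definition spanned S f :=
  exists d : E -> F, forall u, f u = \sum_(w in S) d w * col w u.

Definition spanning S := forall f, spanned S f.

Definition col_indep S :=
  forall c : E -> F, (forall u, \sum_(w in S) c w * col w u = 0) ->
  forall w, w \in S -> c w = 0.

Definition col_basis B :=
  col_indep B /\ forall T, B \subset T -> col_indep T -> T = B.

Definition col_circuit C :=
  ~ col_indep C /\ forall D : {set E}, D \proper C -> col_indep D.

Definition col_loop x := forall B, col_basis B -> x \notin B.

Definition col_coloop x := forall B, col_basis B -> x \in B.

Definition delta (t : V) : V -> F := fun u => (u == t)%:R.

Lemma spanned_ext S f g : f =1 g -> spanned S f -> spanned S g.
Proof. by move=> fg [d Hd]; exists d => u; rewrite -fg. Qed.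

Lemma spanned0 S : spanned S (fun=> 0).
Proof. by exists (fun=> 0) => u; rewrite big1 // => w _; rewrite mul0r. Qed.

Lemma spanned_col S x : x \in S -> spanned S (col x).
Proof.
move=> xS; exists (fun w => (w == x)%:R) => u.
rewrite (bigD1 x) //= eqxx mul1r big1 ?addr0 // => w /andP[_ /negbTE->].
by rewrite mul0r.
Qed.

Lemma spannedD S f g :
  spanned S f -> spanned S g -> spanned S (fun u => f u + g u).
Proof.
move=> [d Hd] [e He]; exists (fun w => d w + e w) => u.
by rewrite Hd He -big_split; apply: eq_bigr => w _; rewrite mulrDl.
Qed.

Lemma spannedZ S a f : spanned S f -> spanned S (fun u => a * f u).
Proof.
move=> [d Hd]; exists (fun w => a * d w) => u.
by rewrite Hd mulr_sumr; apply: eq_bigr => w _; rewrite mulrA.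
Qed.

Lemma spanned_sum S (J : eqType) (r : seq J) (P : pred J) (G : J -> V -> F) :
  (forall j, P j -> spanned S (G j)) ->
  spanned S (fun u => \sum_(j <- r | P j) G j u).
Proof.
move=> HG; elim: r => [|j r IHr].
  by apply: spanned_ext (spanned0 S) => u; rewrite big_nil.
case Pj: (P j); last by apply: spanned_ext IHr => u; rewrite big_cons Pj.
by apply: spanned_ext (spannedD (HG j Pj) IHr) => u; rewrite big_cons Pj.
Qed.

Lemma spanned_trans S T f :
  (forall w, w \in T -> spanned S (col w)) -> spanned T f -> spanned S f.
Proof.
move=> HT [d Hd].
have := @spanned_sum S _ (index_enum E) (fun w => w \in T) (fun w u => d w * col w u)
  (fun w wT => spannedZ (d w) (HT w wT)).
by apply: spanned_ext => u; rewrite Hd.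
Qed.

Lemma spannedS S T f : S \subset T -> spanned S f -> spanned T f.
Proof. by move=> sST; apply: spanned_trans => w /(subsetP sST)/spanned_col. Qed.

Lemma sum_delta f u : f u = \sum_t f t * delta t u.
Proof.
rewrite (bigD1 u) //= /delta eqxx mulr1 big1 ?addr0 //.
by move=> t /negbTE; rewrite eq_sym => ->; rewrite mulr0.
Qed.

Lemma spanning_delta S : (forall t, spanned S (delta t)) -> spanning S.
Proof.
move=> Hdelta f.
have := @spanned_sum S _ (index_enum V) predT (fun t u => f t * delta t u)
  (fun t _ => spannedZ (f t) (Hdelta t)).
by apply: spanned_ext => u; rewrite -sum_delta.
Qed.

Lemma spanned_coord0 S f u :
  (forall w, w \in S -> col w u = 0) -> spanned S f -> f u = 0.
Proof.
move=> H0 [d ->]; rewrite big1 // => w wS.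
by rewrite H0 ?mulr0.
Qed.

Lemma col_indep0 : col_indep set0.
Proof. by move=> c _ w; rewrite inE. Qed.

Lemma col_indep_set1 x u : col x u != 0 -> col_indep [set x].
Proof.
move=> xu c Hc w /set1P ->; apply/eqP.
by have := Hc u; rewrite big_set1 => /eqP; rewrite mulf_eq0 (negbTE xu) orbF.
Qed.

Lemma col_indepS S T : S \subset T -> col_indep T -> col_indep S.
Proof.
move=> sST HT c Hc w wS.
pose c' w := if w \in S then c w else 0.
suff: c' w = 0 by rewrite /c' wS.
apply: HT (subsetP sST w wS) => u.
rewrite (big_setID S) /= (setIidPr sST) [X in _ + X]big1 ?addr0.
  by rewrite -[RHS](Hc u); apply: eq_bigr => v vS; rewrite /c' vS.
by move=> v /setDP[_ /negbTE vS]; rewrite /c' vS mul0r.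
Qed.

Lemma col_indep_setU1 B x :
  col_indep B -> ~ spanned B (col x) -> col_indep (x |: B).
Proof.
move=> HB xB; have xNB : x \notin B by apply/negP => /spanned_col/xB.
move=> c Hc; have sumE u : \sum_(w in x |: B) c w * col w u =
    c x * col x u + \sum_(w in B) c w * col w u by rewrite big_setU1.
have cx : c x = 0.
  apply/eqP/negPn/negP => cx; apply: xB; exists (fun w => - (c x)^-1 * c w) => u.
  apply: (mulfI cx); have /eqP := Hc u; rewrite sumE addr_eq0 => /eqP ->.
  rewrite mulr_sumr -sumrN; apply: eq_bigr => w _.
  by rewrite !mulrA mulrN mulrV ?unitfE // mulN1r mulNr.
have HB0 u : \sum_(w in B) c w * col w u = 0.
  by have := Hc u; rewrite sumE cx mul0r add0r.
by move=> w /setU1P[-> // | wB]; apply: HB HB0 w wB.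
Qed.

Lemma col_indep_notin_span T x :
  col_indep T -> x \in T -> ~ spanned (T :\ x) (col x).
Proof.
move=> HT xT [d Hd].
pose c w := if w == x then -1 else d w.
suff: c x = 0 by rewrite /c eqxx => /eqP; rewrite oppr_eq0 oner_eq0.
apply: (HT c _ x xT) => u; rewrite (big_setD1 x xT) /= {1}/c eqxx mulN1r Hd.
apply/eqP; rewrite addrC subr_eq0; apply/eqP.
by apply: eq_bigr => w /setD1P[/negbTE wx _]; rewrite /c wx.
Qed.

Lemma col_basis_of_spanning B : col_indep B -> spanning B -> col_basis B.
Proof.
move=> HB spanB; split=> // T sBT HT; apply/eqP; rewrite eqEsubset sBT andbT.
apply/subsetP => x xT; apply/negPn/negP => xNB.
apply: (col_indep_notin_span HT xT); apply: spannedS (spanB _).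
apply/subsetP => w wB; rewrite in_setD1 (subsetP sBT) // andbT.
by apply: contraNneq xNB => <-.
Qed.

Lemma exists_col_basis S I :
  I \subset S -> col_indep I -> spanning S ->
  exists B, [/\ I \subset B, B \subset S & col_basis B].
Proof.
move=> + + spanS; have [n] := ubnP #|S :\: I|.
elim: n I => // n IHn I ltIn sIS HI.
case: (classic (exists2 x, x \in S & ~ spanned I (col x))) => [[x xS xNI]|]; last first.
  move=> spanI; exists I; split=> //; apply: col_basis_of_spanning => // f.
  apply: spanned_trans (spanS f) => x xS; apply: NNPP => xNI.
  by apply: spanI; exists x.
have xNI' : x \notin I by apply/negP => /spanned_col/xNI.
have [|||B [sxB sBS HB]] := IHn (x |: I); last 1 first.
- by exists B; split=> //; apply: subset_trans sxB; apply: subsetUr.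
- rewrite ltnS in ltIn; apply: leq_trans ltIn; apply: proper_card; apply/properP; split.
    by apply: setDS; apply: subsetUr.
  by exists x; rewrite !inE ?eqxx ?xS ?xNI'.
- by rewrite subUset sub1set xS.
- exact: col_indep_setU1.
Qed.

Lemma col_loop0 x : col x =1 (fun=> 0) -> col_loop x.
Proof.
move=> x0 B [HB _]; apply/negP => xB.
have : (x == x)%:R = 0 :> F.
  apply: (HB (fun w => (w == x)%:R)) xB => u; rewrite big1 // => w _.
  by case: eqP => [->|_]; rewrite ?x0 ?mulr0 ?mul0r.
by rewrite eqxx => /eqP; rewrite oner_eq0.
Qed.

Lemma col_loopN x u : spanning setT -> col x u != 0 -> ~ col_loop x.
Proof.
move=> spanT xu xloop.
have [B [sxB _ HB]] := exists_col_basis (subsetT _) (col_indep_set1 xu) spanT.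
by have := xloop B HB; rewrite (subsetP sxB) ?set11.
Qed.

Lemma col_coloopN x : spanning [set~ x] -> ~ col_coloop x.
Proof.
move=> spanCx xcoloop.
have [B [_ sBCx HB]] := exists_col_basis (sub0set _) col_indep0 spanCx.
by have := subsetP sBCx x (xcoloop B HB); rewrite !inE eqxx.
Qed.

Lemma spanning_col_basis B : spanning setT -> col_basis B -> spanning B.
Proof.
move=> spanT [HB maxB] f; apply: spanned_trans (spanT f) => x _.
apply: NNPP => xNB; have xB : x \in B.
  by rewrite -(maxB _ (subsetUr [set x] B) (col_indep_setU1 HB xNB)) setU11.
exact: xNB (spanned_col xB).
Qed.

Lemma col_bases_meet2P x y : spanning setT ->
  (forall B, col_basis B -> x \in B \/ y \in B) <-> ~ spanning (~: [set x; y]).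
Proof.
move=> spanT; split=> [meet spanC | NspanC B HB].
  have [B [_ sBC HB]] := exists_col_basis (sub0set _) col_indep0 spanC.
  by case: (meet B HB) => /(subsetP sBC); rewrite !inE eqxx ?orbT.
apply: NNPP => /not_or_and[xNB yNB]; apply/NspanC => f.
apply: spannedS (spanning_col_basis spanT HB f).
apply/subsetP => w wB; rewrite in_setC.
by apply/negP => /set2P[] wE; [apply: xNB | apply: yNB]; rewrite -wE.
Qed.

Lemma col_circuit2 x y u :
  x != y -> col x =1 col y -> col x u != 0 -> col_circuit [set x; y].
Proof.
move=> xy xyE xu; split.
  move=> Hxy; have : (if x == x then 1 else -1) = 0 :> F.
    apply: (Hxy (fun w => if w == x then 1 else -1)) (set21 x y) => v.
    rewrite big_setU1 ?inE //= big_set1 eqxx eq_sym (negbTE xy).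
    by rewrite xyE mul1r mulN1r subrr.
  by rewrite eqxx => /eqP; rewrite oner_eq0.
move=> D /properP[sD [z zxy zND]].
have [a au sDa] : exists2 a, col a u != 0 & D \subset [set a].
  case/set2P: zxy => zE; rewrite zE in zND.
    exists y; first by rewrite -xyE.
    apply/subsetP => d dD; case/set2P: (subsetP sD d dD) => dE; last by rewrite dE set11.
    by rewrite -dE dD in zND.
  exists x => //; apply/subsetP => d dD.
  case/set2P: (subsetP sD d dD) => dE; first by rewrite dE set11.
  by rewrite -dE dD in zND.
exact: col_indepS sDa (col_indep_set1 au).
Qed.

End ColumnMatroid.

Arguments delta {F V} t u.

Lemma eq_set2 (T : finType) (a b x y : T) :
  a != b -> a \in [set x; y] -> b \in [set x; y] -> [set a; b] = [set x; y].
Proof.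
move=> ab axy bxy; apply/eqP.
by rewrite eqEcard subUset !sub1set axy bxy !cards2 ab ltnS leq_b1.
Qed.

Lemma big_set3 (R : nmodType) (T : finType) (a b c : T) (G : T -> R) :
  a != b -> a != c -> b != c ->
  \sum_(w in [set a; b; c]) G w = G a + G b + G c.
Proof.
move=> ab ac bc; rewrite -setUA big_setU1 /=; last by rewrite !inE negb_or ab ac.
by rewrite big_setU1 /= ?inE // big_set1 addrA.
Qed.

Lemma pchar_Fp2 : 2%N \in [pchar 'F_2].
Proof. exact: pchar_Fp. Qed.

Lemma Fp2_addrr (a : 'F_2) : a + a = 0.
Proof. exact: addrr_pchar2 pchar_Fp2 a. Qed.

Lemma Fp2_addr_eq0 (a b : 'F_2) : (a + b == 0) = (a == b).
Proof. by rewrite addr_eq0 (oppr_pchar2 pchar_Fp2). Qed.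

Lemma Fp2_neq0 (a : 'F_2) : a != 0 -> a = 1.
Proof. by case: a => [[|[|]]] // ? _; apply/val_inj. Qed.

Section IASMatroid.
Variables (V : finType) (adj : rel V).
Implicit Types (x y w z : elt V) (t u v : V) (S : {set elt V}).

Local Notation col := (IAS_col adj).

Lemma IAS_col_phiG t : col (phiG t) =1 delta t.
Proof. by []. Qed.

Lemma IAS_col_chiG t u : col (chiG t) u = adjmx adj u t.
Proof. by []. Qed.

Lemma IAS_col_psiG t u : col (psiG t) u = adjmx adj u t + delta t u.
Proof. by []. Qed.

Lemma IAS_col_eq0 w u : u != w.1 -> ~~ adj u w.1 -> col w u = 0.
Proof.
move=> /negbTE uw /negbTE uNw; rewrite /IAS_col /adjmx uw uNw.
by case: ifP => _; [|case: ifP => _]; rewrite ?addr0.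
Qed.

Lemma mem_tauG w v : (w \in tauG v) = (w.1 == v).
Proof.
case: w => t i; rewrite /tauG !inE /phiG /chiG /psiG !xpair_eqE /= -!andb_orr.
suff -> : (i == 0) || (i == 1) || (i == 2) by rewrite andbT.
by case: i => -[|[|[|]]].
Qed.

Lemma card_tauG t : #|tauG t| = 3%N.
Proof. by rewrite /tauG -setUA !cardsU1 cards1 !inE !xpair_eqE eqxx. Qed.

Lemma tauG_third t x y : exists2 z, z \in tauG t & z \notin [set x; y].
Proof.
apply/subsetPn; apply: contraTN isT => /subset_leq_card.
by rewrite card_tauG cards2; case: (x != y).
Qed.

Lemma phiG_neq_chiG t : phiG t != chiG t.
Proof. by rewrite xpair_eqE eqxx. Qed.

Lemma phiG_neq_psiG t : phiG t != psiG t.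
Proof. by rewrite xpair_eqE eqxx. Qed.

Lemma chiG_neq_psiG t : chiG t != psiG t.
Proof. by rewrite xpair_eqE eqxx. Qed.

Lemma sum_IAS_col_tauG t u : \sum_(w in tauG t) col w u = 0.
Proof.
rewrite big_set3 ?phiG_neq_chiG ?phiG_neq_psiG ?chiG_neq_psiG //.
by rewrite IAS_col_phiG IAS_col_chiG IAS_col_psiG [_ + delta t u]addrC Fp2_addrr.
Qed.

Lemma IAS_col_tauG3 t a b c u :
  a \in tauG t -> b \in tauG t -> c \in tauG t -> a != b -> a != c -> b != c ->
  col a u + col b u + col c u = 0.
Proof.
move=> ta tb tc ab ac bc; rewrite -(big_set3 (fun w => col w u) ab ac bc).
suff -> : [set a; b; c] = tauG t by apply: sum_IAS_col_tauG.
apply/eqP; rewrite eqEcard card_tauG -setUA !cardsU1 cards1 !inE negb_or ab ac bc.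
by rewrite !subUset !sub1set ta tb tc.
Qed.

Lemma spanned_delta_tauG S t :
  phiG t \in S \/ chiG t \in S /\ psiG t \in S -> spanned col S (delta t).
Proof.
case=> [phiS | [chiS psiS]].
  exact: spanned_ext (IAS_col_phiG t) (spanned_col col phiS).
apply: spanned_ext (spannedD (spanned_col col chiS) (spanned_col col psiS)) => u.
by rewrite IAS_col_chiG IAS_col_psiG addrA Fp2_addrr add0r.
Qed.

Lemma spanning_setT : spanning col [set: elt V].
Proof.
by apply: spanning_delta => t; apply: spanned_delta_tauG; left; rewrite in_setT.
Qed.

Lemma spanning_setC1 x : spanning col [set~ x].
Proof.
apply: spanning_delta => t; apply: spanned_delta_tauG.
case: (eqVneq (phiG t) x) => [<- | phix]; last by left; rewrite !inE.
by right; split; rewrite !inE eq_sym ?phiG_neq_chiG ?phiG_neq_psiG.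
Qed.

Lemma spanned_delta_nonisolated S t :
  (forall w, w \notin tauG t -> w \in S) -> ~ isolated adj t ->
  spanned col S (delta t).
Proof.
move=> outS Niso; have [r rt atr] : exists2 r, r != t & adj t r.
  by apply: NNPP => Nr; apply: Niso => r rt; apply/negP => atr; apply: Nr; exists r.
have chiS : chiG r \in S by apply: outS; rewrite mem_tauG.
have phiS q : q != t -> spanned col S (fun u => adjmx adj q r * delta q u).
  move=> qt; apply: spannedZ; apply: spanned_ext (IAS_col_phiG q) (spanned_col col _).
  by apply: outS; rewrite mem_tauG.
have := spannedD (spanned_col col chiS)
  (@spanned_sum _ _ _ col S _ (index_enum V) (fun q => q != t) _ phiS).
apply: spanned_ext => u; have atr1 : adjmx adj t r = 1 by rewrite /adjmx atr.
rewrite IAS_col_chiG (sum_delta (fun q => adjmx adj q r) u) (bigD1 t) //=.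
by rewrite atr1 mul1r -addrA Fp2_addrr addr0.
Qed.

Lemma isolated_IAS_col_off v w : isolated adj v -> w \notin tauG v -> col w v = 0.
Proof.
rewrite mem_tauG => iso wv; apply: IAS_col_eq0; first by rewrite eq_sym.
exact: iso.
Qed.

Hypothesis adj_sym : symmetric adj.

Lemma isolated_IAS_colE v w :
  isolated adj v -> w \in tauG v -> col w =1 (fun u => col w v * delta v u).
Proof.
rewrite mem_tauG => iso /eqP wv u; rewrite /delta; case: eqP => [-> | /eqP uv].
  by rewrite mulr1.
by rewrite mulr0 IAS_col_eq0 ?wv // adj_sym iso.
Qed.

Lemma isolated_nonloop_IAS_col v x :
  isolated adj v -> x \in tauG v -> ~ mloop adj x -> col x =1 delta v.
Proof.
move=> iso xv Nloop; have xv1 : col x v = 1.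
  apply: Fp2_neq0; apply/eqP => x0; apply: Nloop; apply: col_loop0 => u.
  by rewrite (isolated_IAS_colE iso xv) x0 mul0r.
by move=> u; rewrite (isolated_IAS_colE iso xv) xv1 mul1r.
Qed.

Lemma unspanned_delta_tauG x y t :
  x != y -> ~ spanned col (~: [set x; y]) (delta t) ->
  phiG t \in [set x; y] /\ [set x; y] \subset tauG t.
Proof.
move=> xy Nspan.
have phixy : phiG t \in [set x; y].
  apply/negPn/negP => phiS; apply: Nspan.
  by apply: spanned_delta_tauG; left; rewrite in_setC.
have [z [zt zxy phiz]] : exists z, [/\ z \in tauG t, z \in [set x; y] & phiG t != z].
  case: (boolP (chiG t \in [set x; y])) => chixy.
    by exists (chiG t); rewrite mem_tauG phiG_neq_chiG.
  case: (boolP (psiG t \in [set x; y])) => psixy.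
    by exists (psiG t); rewrite mem_tauG phiG_neq_psiG.
  by exfalso; apply: Nspan; apply: spanned_delta_tauG; right; rewrite !in_setC.
split=> //; rewrite -(eq_set2 phiz phixy zxy) subUset !sub1set zt.
by rewrite mem_tauG /= eqxx.
Qed.

Lemma unspanned_delta_isolated x y t :
  x != y -> ~ spanned col (~: [set x; y]) (delta t) ->
  [/\ isolated adj t, x \in tauG t, y \in tauG t, col x =1 delta t & col y =1 delta t].
Proof.
move=> xy Nspan; have [phixy /subsetP xyt] := unspanned_delta_tauG xy Nspan.
have [xt yt] : x \in tauG t /\ y \in tauG t by rewrite !xyt ?set21 ?set22.
have iso : isolated adj t.
  apply: NNPP => Niso; apply: Nspan; apply: spanned_delta_nonisolated Niso => w wt.
  by rewrite in_setC; apply: contra wt => /xyt.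
have [z zt zxy] := tauG_third t x y.
have z0 : col z t = 0.
  apply/eqP/negPn/negP => zt0; apply: Nspan.
  have zS : z \in ~: [set x; y] by rewrite in_setC.
  apply: spanned_ext (spannedZ (col z t)^-1 (spanned_col col zS)) => u.
  by rewrite (isolated_IAS_colE iso zt u) mulrA mulVf // mul1r.
have xyE : col x t = col y t.
  move: zxy; rewrite !inE negb_or ![z == _]eq_sym => /andP[xz yz].
  have /eqP := @IAS_col_tauG3 t x y z t xt yt zt xy xz yz.
  by rewrite z0 addr0 Fp2_addr_eq0 => /eqP.
have phi1 : col (phiG t) t = 1 by rewrite IAS_col_phiG /delta eqxx.
have [x1 y1] : col x t = 1 /\ col y t = 1.
  by case/set2P: phixy => phiE; [rewrite -xyE | rewrite xyE]; rewrite -phiE phi1.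
by split=> // u; rewrite (isolated_IAS_colE iso _ u) ?x1 ?y1 ?mul1r.
Qed.

Lemma isolated_not_spanning_setC2 x y v :
  x != y -> isolated adj v -> x \in tauG v -> y \in tauG v ->
  col x =1 delta v -> col y =1 delta v -> ~ spanning col (~: [set x; y]).
Proof.
move=> xy iso xv yv xE yE /(_ (delta v)) /spanned_coord0 delta0.
suff : delta v v = 0 :> 'F_2 by rewrite /delta eqxx => /eqP; rewrite oner_eq0.
apply: delta0 => w; rewrite in_setC !inE negb_or ![w == _]eq_sym => /andP[xw yw].
have [wv | wNv] := boolP (w \in tauG v); last exact: isolated_IAS_col_off.
have := @IAS_col_tauG3 v x y w v xv yv wv xy xw yw.
by rewrite xE yE Fp2_addrr add0r.
Qed.

Lemma IAS_not_spanning_setC2P x y : x != y ->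
  ~ spanning col (~: [set x; y]) <->
  exists v, isolated adj v /\ x \in tauG v /\ y \in tauG v /\
            ~ mloop adj x /\ ~ mloop adj y.
Proof.
move=> xy; split=> [Nspan | [v [iso [xv [yv [Nx Ny]]]]]]; last first.
  exact: isolated_not_spanning_setC2 xy iso xv yv
    (isolated_nonloop_IAS_col iso xv Nx) (isolated_nonloop_IAS_col iso yv Ny).
have [t Nt] : exists t, ~ spanned col (~: [set x; y]) (delta t).
  apply: NNPP => Nt; apply: Nspan; apply: spanning_delta => t.
  by apply: NNPP => Ntt; apply: Nt; exists t.
have [iso xt yt xE yE] := unspanned_delta_isolated xy Nt.
exists t; do 3!split=> //; split; apply: (col_loopN (u := t) spanning_setT);
  by rewrite ?xE ?yE /delta eqxx oner_eq0.
Qed.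

Lemma isolated_parallel x y v :
  x != y -> isolated adj v -> x \in tauG v -> y \in tauG v ->
  ~ mloop adj x -> ~ mloop adj y -> parallel adj x y.
Proof.
move=> xy iso xv yv Nx Ny; have xE := isolated_nonloop_IAS_col iso xv Nx.
have yE := isolated_nonloop_IAS_col iso yv Ny.
do 3!split=> //; last by rewrite cards2 xy.
apply: (col_circuit2 (u := v)) xy _ _ => [u|]; first by rewrite xE yE.
by rewrite xE /delta eqxx oner_eq0.
Qed.

End IASMatroid.

Theorem proposition9p1 (V : finType) (adj : rel V) :
  looped_simple_graph adj ->
  (forall x : elt V, ~ coloop adj x) /\
  (forall x y : elt V, x <> y ->
     (in_series adj x y <->
      exists v : V, isolated adj v /\ x \in tauG v /\ y \in tauG v /\
                    ~ mloop adj x /\ ~ mloop adj y) /\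
     ((exists v : V, isolated adj v /\ x \in tauG v /\ y \in tauG v /\
                    ~ mloop adj x /\ ~ mloop adj y) -> parallel adj x y)).
Proof.
rewrite /looped_simple_graph => adj_sym.
have no_coloop x : ~ coloop adj x := col_coloopN (spanning_setC1 adj x).
split=> // x y /eqP xy.
split=> [|[v [iso [xv [yv [Nx Ny]]]]]].
  apply: (iff_trans _ (IAS_not_spanning_setC2P adj_sym xy)).
  apply: (iff_trans _ (col_bases_meet2P x y (spanning_setT adj))).
  by split=> [[[/no_coloop] | [_ [_ meet]]] | meet]; last right.
exact: (isolated_parallel adj_sym xy iso xv yv Nx Ny).
Qed.
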